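(* Let $\mathcal O$ be a non-degenerate conic of $\mathrm{PG}(2,q^2)$ and let $\mathcal Q_\infty,\mathcal Q_0$ be the quadrics of $\mathrm{PG}(4,q)$ associated with $\mathcal O$ (so $[\mathcal O]=\mathcal Q_\infty\cap\mathcal Q_0$). For every $t\in\mathbb F_q\cup\{\infty\}$, the quadric $\mathcal Q_t^\star$ of $\mathrm{PG}(4,q^2)$ with equation $tf_\infty+f_0=0$ (meaning $f_\infty=0$ when $t=\infty$) meets the transversal $g$ in exactly $0$, $1$ or $2$ points according as $\mathcal O$ meets $\ell_\infty$ in $0$, $1$ or $2$ points respectively.
   Context: Coordinates: $q$ a prime power; $\tau$ is a primitive element of $\mathbb F_{q^2}$ with minimal polynomial $x^2-t_1x-t_0$ over $\mathbb F_q$. $\mathrm{PG}(2,q^2)$ has coordinates $(x,y,z)$, $\ell_\infty: z=0$; $\mathrm{PG}(4,q)$ has coordinates $(x_0,x_1,y_0,y_1,z)$ and $\Sigma_\infty: z=0$. The Bruck–Bose map sends the affine point $(x_0+x_1\tau,y_0+y_1\tau,z)$, $x_i,y_i,z\in\mathbb F_q$, $z\ne0$, to $(x_0,x_1,y_0,y_1,z)$, and the point $(\delta,1,0)\in\ell_\infty$, $\delta=d_0+d_1\tau$, to the spread line $\langle(d_0,d_1,1,0,0),(t_0d_1,d_0+t_1d_1,0,1,0)\rangle$ (and $(1,0,0)$ to $\langle(1,0,0,0,0),(0,1,0,0,0)\rangle$); these lines form a regular spread $\mathcal S$ of $\Sigma_\infty$. In $\mathrm{PG}(4,q^2)$ let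 $A_0=(\tau^q,-1,0,0,0)$, $A_1=(0,0,\tau^q,-1,0)$; the transversals of $\mathcal S$ are $g=\langle A_0,A_1\rangle$ and $g^q=\langle A_0^q,A_1^q\rangle$. If $\mathcal O$ has equation $f(x,y,z)=0$ with $f$ a homogeneous quadratic over $\mathbb F_{q^2}$, substituting $x=x_0+x_1\tau$, $y=y_0+y_1\tau$, $z$ and reducing with $\tau^2=t_1\tau+t_0$ gives $f=f_\infty(x_0,x_1,y_0,y_1,z)+\tau f_0(x_0,x_1,y_0,y_1,z)$ with $f_\infty,f_0$ homogeneous quadratics over $\mathbb F_q$; $\mathcal Q_\infty,\mathcal Q_0$ are the quadrics $f_\infty=0$, $f_0=0$ of $\mathrm{PG}(4,q)$. For a quadric $\mathcal Q$ of $\mathrm{PG}(4,q)$, $\mathcal Q^\star$ is the set of points of $\mathrm{PG}(4,q^2)$ satisfying the same equation. *)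

From HB Require Import structures.
From mathcomp Require Import all_boot all_order all_algebra.
Set Implicit Arguments. Unset Strict Implicit. Unset Printing Implicit Defensive.
Import GRing.Theory.
Local Open Scope ring_scope.

Definition qform (L : fieldType) (n : nat) (c : 'I_n -> 'I_n -> L)
  (v : 'rV[L]_n) : L :=
  \sum_(i < n) \sum_(j < n | (i <= j)%N) c i j * v 0 i * v 0 j.

(* Conic f = a x^2 + b y^2 + c z^2 + d xy + e xz + h yz of PG(2,L) is
   non-degenerate iff its (half-)discriminant
   4abc + dhe - ah^2 - be^2 - cd^2 is non-zero (valid in every characteristic). *)
Definition conic_disc (L : fieldType) (c : 'I_3 -> 'I_3 -> L) : L :=
  let i0 : 'I_3 := inord 0 in let i1 : 'I_3 := inord 1 in
  let i2 : 'I_3 := inord 2 in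
  let a := c i0 i0 in let b := c i1 i1 in let cc := c i2 i2 in
  let d := c i0 i1 in let e := c i0 i2 in let h := c i1 i2 in
  4%:R * a * b * cc + d * h * e - a * h ^+ 2 - b * e ^+ 2 - cc * d ^+ 2.

(* Decomposition x = cre x + cim x * tau with cre x, cim x in F_q
   (F_q = {y | y^q = y}); explicit formulas using the Frobenius x |-> x^q. *)
Definition cim (L : fieldType) (q : nat) (tau x : L) : L :=
  (x - x ^+ q) / (tau - tau ^+ q).
Definition cre (L : fieldType) (q : nat) (tau x : L) : L :=
  x - cim q tau x * tau.

Definition bb (L : fieldType) (tau : L) (X : 'rV[L]_5) : 'rV[L]_3 :=
  \row_(i < 3)
    (if (i : nat) == 0%N then X 0 (inord 0) + X 0 (inord 1) * tau
     else if (i : nat) == 1%N then X 0 (inord 2) + X 0 (inord 3) * tau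
     else X 0 (inord 4)).

Definition bbcoef (L : fieldType) (c : 'I_3 -> 'I_3 -> L) (tau : L)
  (i j : 'I_5) : L :=
  let F := fun X => qform c (bb tau X) in
  let e := fun k : 'I_5 => (delta_mx 0 k : 'rV[L]_5) in
  if i == j then F (e i) else F (e i + e j) - F (e i) - F (e j).

(* f = f_inf + tau f_0 : coefficients of f_inf and f_0 (in F_q). *)
Definition finf_coef (L : fieldType) (q : nat) (c : 'I_3 -> 'I_3 -> L)
  (tau : L) (i j : 'I_5) : L := cre q tau (bbcoef c tau i j).
Definition f0_coef (L : fieldType) (q : nat) (c : 'I_3 -> 'I_3 -> L)
  (tau : L) (i j : 'I_5) : L := cim q tau (bbcoef c tau i j).

(* Q_t : t f_inf + f_0 = 0 for t in F_q (Some t), f_inf = 0 for t = infinity (None). *)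
Definition Qt_coef (L : fieldType) (q : nat) (c : 'I_3 -> 'I_3 -> L)
  (tau : L) (t : option L) (i j : 'I_5) : L :=
  match t with
  | Some s => s * finf_coef q c tau i j + f0_coef q c tau i j
  | None => finf_coef q c tau i j
  end.

(* Canonical representatives of projective points: non-zero vectors whose
   first non-zero coordinate equals 1. *)
Definition pnormal (L : fieldType) (n : nat) (v : 'rV[L]_n) : bool :=
  [exists i : 'I_n, (v 0 i == 1) &&
     [forall j : 'I_n, ((j : nat) < i)%N ==> (v 0 j == 0)]].

Definition A0 (L : fieldType) (q : nat) (tau : L) : 'rV[L]_5 :=
  \row_(i < 5) [:: tau ^+ q; -1; 0; 0; 0]`_i.
Definition A1 (L : fieldType) (q : nat) (tau : L) : 'rV[L]_5 :=
  \row_(i < 5) [:: 0; 0; tau ^+ q; -1; 0]`_i.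
Definition gline (L : fieldType) (q : nat) (tau : L) : 'M[L]_(2, 5) :=
  col_mx (A0 q tau) (A1 q tau).

From HB Require Import structures.
From mathcomp Require Import all_boot all_order all_algebra all_field.
From mathcomp Require Import ring zify.
Set Implicit Arguments. Unset Strict Implicit. Unset Printing Implicit Defensive.
Import GRing.Theory.
Local Open Scope ring_scope.

(* Write w = tau^q and let B be the coefficient array of f o bb, the form
   f(x0 + x1 tau, y0 + y1 tau, z) in five variables.  Since f = f_inf + tau f_0
   and f^q = f_inf + w f_0, the coefficients of Q_t are lambda_t B + mu_t B^q
   for explicit scalars lambda_t, mu_t, with lambda_t != 0 when t is in
   F_q \cup {infinity}.  On a point a A_0 + b A_1 of g:
   - bb(a A_0 + b A_1) = (w - tau) (a, b, 0), so B takes the value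
     (w - tau)^2 f(a, b, 0);
   - the conjugate form B^q vanishes, because conjugation sends g to g^q and
     bb maps g^q to 0.
   Hence Q_t restricted to g is lambda_t (w - tau)^2 f(a, b, 0), and
   (x, y, 0) |-> (x/w) A_0 + (y/w) A_1 is a bijection between the normalized
   points of O on l_inf and those of Q_t^* on g.  Finally a non-degenerate
   conic does not contain l_inf, so it meets it in at most two points. *)

Section QuadraticForms.
Variables (L : fieldType) (n : nat).
Implicit Types (K : 'I_n -> 'I_n -> L) (v : 'rV[L]_n).

Lemma qform_lin K K1 K2 al be v :
  (forall i j, K i j = al * K1 i j + be * K2 i j) ->
  qform K v = al * qform K1 v + be * qform K2 v.
Proof.
move=> hK; rewrite /qform !mulr_sumr -big_split; apply: eq_bigr => i _.
by rewrite !mulr_sumr -big_split; apply: eq_bigr => j _ /=; rewrite hK; ring.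
Qed.

Lemma qformZ K s v : qform K (s *: v) = s ^+ 2 * qform K v.
Proof.
rewrite /qform mulr_sumr; apply: eq_bigr => i _; rewrite mulr_sumr.
by apply: eq_bigr => j _; rewrite !mxE; ring.
Qed.

Lemma qform0 K : qform K 0 = 0.
Proof. by rewrite -(scale0r 0) qformZ expr0n mul0r. Qed.

Lemma qform_map (sigma : L -> L) K v :
  sigma 0 = 0 -> {morph sigma : x y / x + y} -> {morph sigma : x y / x * y} ->
  qform (fun i j => sigma (K i j)) (map_mx sigma v) = sigma (qform K v).
Proof.
move=> s0 sD sM; rewrite /qform (big_morph sigma sD s0); apply: eq_bigr => i _.
by rewrite (big_morph sigma sD s0); apply: eq_bigr => j _; rewrite !mxE !sM.
Qed.

End QuadraticForms.

(* Sums over ordinals rewritten as sums over nat with inord, so that forms in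
   a concrete number of variables can be expanded by computation. *)
Lemma qform_natE (L : fieldType) n (K : 'I_n.+1 -> 'I_n.+1 -> L) v :
  qform K v = \sum_(0 <= i < n.+1) \sum_(0 <= j < n.+1)
     (if (i <= j)%N then K (inord i) (inord j) * v 0 (inord i) * v 0 (inord j)
      else 0).
Proof.
rewrite /qform big_mkord; apply: eq_bigr => i _.
by rewrite big_mkord big_mkcond /=; apply: eq_bigr => j _; rewrite !inord_val.
Qed.

Lemma inord_eq n a b : (a < n.+1)%N -> (b < n.+1)%N ->
  (@inord n a == inord b) = (a == b).
Proof. by move=> ha hb; rewrite -val_eqE /= !inordK. Qed.

Section BruckBose.
Variables (L : fieldType) (c : 'I_3 -> 'I_3 -> L) (tau : L).

Definition conic_poly (x y z : L) : L :=
  let k a b := c (inord a) (inord b) in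
  k 0%N 0%N * x * x + k 0%N 1%N * x * y + k 0%N 2%N * x * z + k 1%N 1%N * y * y
  + k 1%N 2%N * y * z + k 2%N 2%N * z * z.

Lemma qform3E (v : 'rV[L]_3) :
  qform c v = conic_poly (v 0 (inord 0)) (v 0 (inord 1)) (v 0 (inord 2)).
Proof. by rewrite qform_natE !big_nat_recl // !big_geq //= /conic_poly; ring. Qed.

Definition bb_poly (x : nat -> L) : L :=
  conic_poly (x 0%N + x 1%N * tau) (x 2%N + x 3%N * tau) (x 4%N).

Lemma qform_bb (X : 'rV[L]_5) :
  qform c (bb tau X) = bb_poly (fun a => X 0 (inord a)).
Proof. by rewrite qform3E /bb_poly /bb !mxE !inordK. Qed.

Lemma bb_poly_ext (x y : nat -> L) :
  (forall a, (a < 5)%N -> x a = y a) -> bb_poly x = bb_poly y.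
Proof. by move=> h; rewrite /bb_poly !h. Qed.

Lemma qform_bb_unit a : (a < 5)%N ->
  qform c (bb tau (delta_mx 0 (inord a))) = bb_poly (fun b => (b == a)%:R).
Proof.
by move=> ha; rewrite qform_bb; apply: bb_poly_ext => b hb; rewrite mxE inord_eq.
Qed.

Lemma qform_bb_unit2 a b : (a < 5)%N -> (b < 5)%N ->
  qform c (bb tau (delta_mx 0 (inord a) + delta_mx 0 (inord b))) =
  bb_poly (fun d => (d == a)%:R + (d == b)%:R).
Proof.
move=> ha hb; rewrite qform_bb.
by apply: bb_poly_ext => d hd; rewrite !mxE !inord_eq.
Qed.

Lemma qform_bbcoef (X : 'rV[L]_5) : qform (bbcoef c tau) X = qform c (bb tau X).
Proof.
rewrite qform_natE qform_bb !big_nat_recl // !big_geq //= /bbcoef !inord_eq //=.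
by rewrite !qform_bb_unit2 // !qform_bb_unit // /bb_poly /conic_poly /=; ring.
Qed.

End BruckBose.

(* With w = tau^q, the coefficients of Q_t are a fixed combination of those of
   f o bb and of their conjugates: t f_inf + f_0 = lambda_t B + mu_t B^q. *)
Definition qt_lambda (L : fieldType) (q : nat) (tau : L) (t : option L) : L :=
  let w := tau ^+ q in
  if t is Some s then (1 - s * w) / (tau - w) else - w / (tau - w).
Definition qt_mu (L : fieldType) (q : nat) (tau : L) (t : option L) : L :=
  let w := tau ^+ q in
  if t is Some s then - (1 - s * tau) / (tau - w) else tau / (tau - w).

Lemma Qt_coefE (L : fieldType) q (c : 'I_3 -> 'I_3 -> L) tau t i j :
  tau - tau ^+ q != 0 ->
  Qt_coef q c tau t i j =
  qt_lambda q tau t * bbcoef c tau i j + qt_mu q tau t * bbcoef c tau i j ^+ q.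
Proof.
move=> tau_neq_w; rewrite /Qt_coef /finf_coef /f0_coef /cre /cim /qt_lambda /qt_mu.
by case: t => [s|]; field.
Qed.

Definition pt3 (L : fieldType) (x y z : L) : 'rV[L]_3 := \row_(i < 3) [:: x; y; z]`_i.

Lemma pt3E (L : fieldType) (x y z : L) a : (a < 3)%N ->
  pt3 x y z 0 (inord a) = [:: x; y; z]`_a.
Proof. by move=> ha; rewrite mxE inordK. Qed.

Lemma row3P (L : fieldType) (u : 'rV[L]_3) :
  u = pt3 (u 0 (inord 0)) (u 0 (inord 1)) (u 0 (inord 2)).
Proof.
apply/rowP => i; rewrite -[i]inord_val mxE inordK //.
by case: i => [[|[|[|i]]] hi].
Qed.

Section Transversal.
Variables (L : fieldType) (q : nat) (tau : L).
Local Notation w := (tau ^+ q).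

Definition gpt (a b : L) : 'rV[L]_5 := a *: A0 q tau + b *: A1 q tau.

Lemma gptE a b d : (d < 5)%N ->
  gpt a b 0 (inord d) = [:: a * w; - a; b * w; - b; 0]`_d.
Proof.
move=> hd; rewrite /gpt /A0 /A1 !mxE inordK //.
by case: d hd => [|[|[|[|[|d]]]]] //= _; ring.
Qed.

Lemma glineP (v : 'rV[L]_5) :
  reflect (exists a b, v = gpt a b) (v <= gline q tau)%MS.
Proof.
have [sA0 sA1] : (A0 q tau <= gline q tau)%MS /\ (A1 q tau <= gline q tau)%MS.
  by apply/andP; rewrite -col_mx_sub submx_refl.
apply: (iffP idP) => [/submxP [D ->] | [a [b ->]]]; last first.
  by rewrite addmx_sub // scalemx_sub.
have gline_mul (E : 'M[L]_(1, 1 + 1)) :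
    E *m gline q tau = gpt (lsubmx E 0 0) (rsubmx E 0 0).
  rewrite -{1}[E]hsubmxK mul_row_col {1}[lsubmx E]mx11_scalar.
  by rewrite {1}[rsubmx E]mx11_scalar !mul_scalar_mx.
by exists (lsubmx (D : 'M_(1, 1 + 1)) 0 0), (rsubmx (D : 'M_(1, 1 + 1)) 0 0);
  apply: gline_mul.
Qed.

Lemma bb_gpt a b : bb tau (gpt a b) = (w - tau) *: pt3 a b 0.
Proof.
apply/rowP => i; rewrite -[i]inord_val !mxE !inordK //.
by case: i => [[|[|[|i]]] hi] //=; ring.
Qed.

Lemma bb_map_gpt (sigma : L -> L) a b :
  sigma 0 = 0 -> {morph sigma : x y / x + y} -> {morph sigma : x y / x * y} ->
  sigma w = tau -> bb tau (map_mx sigma (gpt a b)) = 0.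
Proof.
move=> s0 sD sM sw.
have sN x : sigma (- x) = - sigma x.
  by apply/eqP; rewrite -subr_eq0 opprK -sD addNr s0.
apply/rowP => i; rewrite -[i]inord_val !mxE !inordK //.
by case: i => [[|[|[|i]]] hi] //=;
  rewrite !(mulr0, addr0, add0r, mulrN1) ?sM ?sN ?sw ?s0; ring.
Qed.

End Transversal.

Section QtOnTransversal.
Variables (L : fieldType) (q : nat) (c : 'I_3 -> 'I_3 -> L) (tau : L).
Hypotheses (q_gt0 : (0 < q)%N)
  (frobD : {morph (fun x : L => x ^+ q) : x y / x + y})
  (frobK : forall x : L, (x ^+ q) ^+ q = x).
Local Notation w := (tau ^+ q).

(* The conjugate form B^q vanishes identically on g: g^q is mapped to 0 by bb. *)
Lemma conj_form_on_g a b :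
  qform (fun i j => bbcoef c tau i j ^+ q) (gpt q tau a b) = 0.
Proof.
have frob0 : (0 : L) ^+ q = 0 by rewrite expr0n eqn0Ngt q_gt0.
have frobM : {morph (fun x : L => x ^+ q) : x y / x * y} by move=> x y; apply: exprMn.
have -> : gpt q tau a b =
    map_mx (fun x => x ^+ q) (map_mx (fun x => x ^+ q) (gpt q tau a b)).
  by apply/matrixP => i j; rewrite !mxE frobK.
rewrite (qform_map (sigma := fun x : L => x ^+ q)) // qform_bbcoef bb_map_gpt //.
by rewrite qform0.
Qed.

Lemma Qt_on_g t a b : tau - w != 0 ->
  qform (Qt_coef q c tau t) (gpt q tau a b) =
  qt_lambda q tau t * (w - tau) ^+ 2 * qform c (pt3 a b 0).
Proof.
move=> tau_neq_w; rewrite (qform_lin _ (fun i j => Qt_coefE c t i j tau_neq_w)).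
by rewrite conj_form_on_g qform_bbcoef bb_gpt qformZ mulr0 addr0 mulrA.
Qed.

End QtOnTransversal.

Lemma pnormalP (L : fieldType) n (v : 'rV[L]_n.+1) :
  reflect (exists i, [/\ (i < n.+1)%N, v 0 (inord i) = 1 &
             forall j, (j < i)%N -> v 0 (inord j) = 0]) (pnormal v).
Proof.
apply: (iffP existsP) => [[i /andP [/eqP h1 /forallP h2]] | [i [hi h1 h2]]].
  exists i; split => //; first by rewrite inord_val.
  move=> j hj; have hjn : (j < n.+1)%N by apply: ltn_trans hj (ltn_ord i).
  by have /implyP := h2 (inord j); rewrite inordK // => /(_ hj) /eqP.
exists (inord i); rewrite inordK // h1 eqxx /=; apply/forallP => j; apply/implyP => hj.
by rewrite -[j]inord_val h2.
Qed.

Lemma pnormal_pt3 (L : fieldType) (x y : L) :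
  pnormal (pt3 x y 0) = (x == 1) || (x == 0) && (y == 1).
Proof.
apply/pnormalP/idP => [[i [hi]] | /orP [/eqP hx | /andP [/eqP hx /eqP hy]]].
- rewrite pt3E //; case: i hi => [|[|[|i]]] //= _ h1 h0.
  + by rewrite h1 eqxx.
  + by move: (h0 0%N isT); rewrite pt3E //= => ->; rewrite h1 !eqxx andbT orbT.
  + by move/esym/eqP: h1; rewrite oner_eq0.
- by exists 0%N; split; rewrite ?pt3E.
- by exists 1%N; split; rewrite ?pt3E // => -[|j] //; rewrite pt3E.
Qed.

Section NormalizedPointsOfg.
Variables (L : fieldType) (q : nat) (tau : L).
Local Notation w := (tau ^+ q).
Hypothesis w_neq0 : w != 0.

Lemma pnormal_gpt (x y : L) :
  pnormal (gpt q tau (x / w) (y / w)) = pnormal (pt3 x y 0).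
Proof.
have coord d : (d < 5)%N -> gpt q tau (x / w) (y / w) 0 (inord d) =
    [:: x; - (x / w); y; - (y / w); 0]`_d.
  by move=> hd; rewrite gptE // !divfK.
have opp_div0 z : z = 0 -> - (z / w) <> 1.
  by move=> ->; rewrite mul0r oppr0 => /esym/eqP; rewrite oner_eq0.
rewrite pnormal_pt3; apply/pnormalP/idP => [[i [hi]] | ].
  rewrite coord //; case: i hi => [|[|[|[|[|i]]]]] //= _ h1 h0.
  - by rewrite h1 eqxx.
  - by move: (h0 0%N isT); rewrite coord // => /opp_div0.
  - by move: (h0 0%N isT); rewrite coord //= => ->; rewrite h1 !eqxx andbT orbT.
  - by move: (h0 2%N isT); rewrite coord // => /opp_div0.
  - by move/esym/eqP: h1; rewrite oner_eq0.
case/orP => [/eqP hx | /andP [/eqP hx /eqP hy]].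
  by exists 0%N; split; rewrite ?coord.
exists 2%N; split; rewrite ?coord // => -[|[|j]] // _; rewrite coord //= hx.
by rewrite mul0r oppr0.
Qed.

End NormalizedPointsOfg.

Definition conic_at_infinity (L : finFieldType) (c : 'I_3 -> 'I_3 -> L) :
  {set 'rV[L]_3} :=
  [set v : 'rV[L]_3 | [&& pnormal v, v 0 (inord 2) == 0 & qform c v == 0]].
Definition Qt_on_gline (L : finFieldType) (q : nat) (c : 'I_3 -> 'I_3 -> L)
  (tau : L) (t : option L) : {set 'rV[L]_5} :=
  [set v : 'rV[L]_5 | [&& pnormal v, (v <= gline q tau)%MS
                        & qform (Qt_coef q c tau t) v == 0]].

Lemma pt3_div (L : fieldType) (x y w : L) :
  pt3 (x / w) (y / w) 0 = w^-1 *: pt3 x y 0.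
Proof.
apply/rowP => i; rewrite !mxE.
by case: i => [[|[|[|i]]] hi] //=; rewrite ?mulr0 // mulrC.
Qed.

(* Main correspondence: (x, y, 0) |-> (x/w) A_0 + (y/w) A_1 is a bijection
   between the points of O on l_inf and the points of Q_t^* on g, provided
   lambda_t != 0. *)
Lemma card_Qt_on_gline (L : finFieldType) q (c : 'I_3 -> 'I_3 -> L) tau t :
  (0 < q)%N -> {morph (fun x : L => x ^+ q) : x y / x + y} ->
  (forall x : L, (x ^+ q) ^+ q = x) ->
  tau ^+ q != 0 -> tau - tau ^+ q != 0 -> qt_lambda q tau t != 0 ->
  #|Qt_on_gline q c tau t| = #|conic_at_infinity c|.
Proof.
move=> q_gt0 frobD frobK w_neq0 tau_neq_w lambda_neq0; set w := tau ^+ q.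
have wt : w - tau != 0 by rewrite -oppr_eq0 opprB.
pose psi (u : 'rV[L]_3) := gpt q tau (u 0 (inord 0) / w) (u 0 (inord 1) / w).
have Qt_psi x y : (qform (Qt_coef q c tau t) (gpt q tau (x / w) (y / w)) == 0) =
    (qform c (pt3 x y 0) == 0).
  rewrite Qt_on_g // -/w pt3_div qformZ !mulf_eq0 (negbTE lambda_neq0).
  by rewrite (negbTE wt) invr_eq0 (negbTE w_neq0) orbF.
have -> : Qt_on_gline q c tau t = psi @: conic_at_infinity c.
  apply/setP => v; rewrite /Qt_on_gline /conic_at_infinity inE; apply/idP/imsetP.
    case/and3P => hn /glineP [a [b ev]] hq; subst v.
    exists (pt3 (a * w) (b * w) 0); last first.
      by rewrite /psi !pt3E //= !mulfK.
    by rewrite inE pt3E //= eqxx -(pnormal_gpt w_neq0) -Qt_psi !mulfK // hn hq.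
  move=> [u]; rewrite inE => /and3P [hn /eqP h2 hq] ->.
  rewrite (row3P u) h2 in hn hq; rewrite /psi (pnormal_gpt w_neq0) Qt_psi hn hq /=.
  by rewrite andbT; apply/glineP; do 2!eexists.
apply: card_in_imset => u u'; rewrite /conic_at_infinity !inE.
move=> /and3P [_ /eqP h2 _] /and3P [_ /eqP h2' _] /rowP e.
have divw_inj := mulIf (invr_neq0 w_neq0).
move: (e (inord 1)) (e (inord 3)); rewrite !gptE //=.
move=> /oppr_inj /divw_inj h0 /oppr_inj /divw_inj h1.
by rewrite (row3P u) (row3P u') h0 h1 h2 h2'.
Qed.

Lemma conic_disc_line_infty (L : fieldType) (c : 'I_3 -> 'I_3 -> L) :
  c (inord 0) (inord 0) = 0 -> c (inord 0) (inord 1) = 0 ->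
  c (inord 1) (inord 1) = 0 -> conic_disc c = 0.
Proof. by move=> h0 h1 h2; rewrite /conic_disc /= h0 h1 h2; ring. Qed.

(* A non-degenerate conic meets l_inf in at most two points: they are the
   (1, r, 0) with r a root of c00 + c01 X + c11 X^2, and (0, 1, 0) if c11 = 0,
   in which case that polynomial has at most one root. *)
Lemma card_conic_at_infinity (L : finFieldType) (c : 'I_3 -> 'I_3 -> L) :
  conic_disc c != 0 -> (#|conic_at_infinity c| <= 2)%N.
Proof.
move=> hdisc.
set a0 := c (inord 0) (inord 0); set a1 := c (inord 0) (inord 1).
set a2 := c (inord 1) (inord 1).
set p : {poly L} := \poly_(i < 3) [:: a0; a1; a2]`_i.
have p_neq0 : p != 0.
  apply: contra hdisc => /eqP p0; apply/eqP.
  have coef_p i : (i < 3)%N -> [:: a0; a1; a2]`_i = 0.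
    move=> hi; have := congr1 (fun r : {poly L} => r`_i) p0.
    by rewrite coef_poly hi coef0.
  by apply: conic_disc_line_infty; [exact: (coef_p 0%N) | exact: (coef_p 1%N)
                                    | exact: (coef_p 2%N)].
have p_eval r : p.[r] = a0 + a1 * r + a2 * r ^+ 2.
  by rewrite horner_poly !big_ord_recl big_ord0 /= /bump /=; ring.
set R := [set r : L | root p r].
have card_R : (#|R| < size p)%N.
  rewrite cardE; apply: max_poly_roots; [exact: p_neq0 | | exact: enum_uniq].
  by apply/allP => r; rewrite mem_enum inE.
set E : {set 'rV[L]_3} := if a2 == 0 then [set pt3 0 1 0] else set0.
have sub : conic_at_infinity c \subset (fun r => pt3 1 r 0) @: R :|: E.
  apply/subsetP => v; rewrite /conic_at_infinity inE => /and3P [hn /eqP h2 hq].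
  rewrite (row3P v) h2 pnormal_pt3 in hn hq *; rewrite qform3E /conic_poly /= in hq.
  rewrite !pt3E //= in hq.
  case/orP: hn => [/eqP hx | /andP [/eqP hx /eqP hy]]; apply/setUP.
    left; apply/imsetP; exists (v 0 (inord 1)); rewrite ?hx //.
    by rewrite inE /root p_eval -(eqP hq) hx -/a0 -/a1 -/a2; apply/eqP; ring.
  right; have ha2 : a2 = 0 by rewrite -(eqP hq) hx hy -/a0 -/a1 -/a2; ring.
  by rewrite /E ha2 eqxx hx hy inE.
apply: (leq_trans (subset_leq_card sub)); apply: (leq_trans (leq_card_setU _ _)).
have card_img := leq_imset_card (fun r => pt3 1 r 0) R.
rewrite /E; case: ifP => [/eqP ha2 | _]; last first.
  rewrite cards0 addn0; apply: (leq_trans card_img).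
  by rewrite -ltnS; apply: (leq_trans card_R); apply: size_poly.
rewrite cards1 addn1; apply: (leq_trans card_img); rewrite -ltnS.
apply: (leq_trans card_R); apply/leq_sizeP => j hj; rewrite coef_poly.
by case: j hj => [|[|[|j]]] //= _; rewrite ha2.
Qed.

Lemma frobenius_power_additive (L : fieldType) (p k : nat) :
  p \in [pchar L] -> {morph (fun x : L => x ^+ (p ^ k)) : x y / x + y}.
Proof.
move=> chp x y; apply: exprDn_pchar.
by rewrite (eq_pnat _ (pcharf_eq chp)) pnatX pnat_id ?orTb // (pcharf_prime chp).
Qed.

Lemma frobenius_involutive (L : finFieldType) (q : nat) :
  #|L| = (q ^ 2)%N -> forall x : L, (x ^+ q) ^+ q = x.
Proof. by move=> hL x; rewrite -exprM mulnn -hL expf_card. Qed.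

Lemma prim_root_frob_neq (L : fieldType) (n q : nat) (tau : L) :
  n.-primitive_root tau -> (0 < q.-1 < n)%N -> tau ^+ q != tau.
Proof.
move=> prim /andP [q1_gt0 q1_lt_n]; apply/eqP => fixed.
have tau_neq0 : tau != 0 by rewrite (prim_root_eq0 prim) -lt0n (prim_order_gt0 prim).
have : tau ^+ q.-1 = 1.
  have q_gt0 : (0 < q)%N by case: q q1_gt0 {q1_lt_n fixed}.
  by apply: (mulIf tau_neq0); rewrite mul1r -exprSr prednK.
move/eqP; rewrite -(prim_order_dvd prim) => /(dvdn_leq q1_gt0).
by rewrite leqNgt q1_lt_n.
Qed.

Lemma qt_lambda_neq0 (L : fieldType) (q : nat) (tau : L) (t : option L) :
  (forall x : L, (x ^+ q) ^+ q = x) -> tau ^+ q != 0 -> tau - tau ^+ q != 0 ->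
  (if t is Some s then s ^+ q == s else true) -> qt_lambda q tau t != 0.
Proof.
move=> frobK w_neq0 tau_neq_w; rewrite /qt_lambda.
case: t => [s /eqP s_fixed | _].
  2: by rewrite mulf_eq0 oppr_eq0 invr_eq0 negb_or w_neq0.
rewrite mulf_eq0 invr_eq0 (negbTE tau_neq_w) orbF subr_eq0; apply/eqP => sw.
have s_tau : s * tau = 1 by rewrite -(frobK tau) -s_fixed -exprMn -sw expr1n.
have s_neq0 : s != 0 by apply: contra_eq_neq s_tau => ->; rewrite mul0r eq_sym oner_eq0.
move/eqP: tau_neq_w; apply; apply/eqP; rewrite subr_eq0.
by apply/eqP/(mulfI s_neq0); rewrite s_tau sw.
Qed.

Theorem theorem4p1 (L : finFieldType) (q : nat) (c : 'I_3 -> 'I_3 -> L)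
  (tau : L) (t : option L) :
  (exists p k : nat, [/\ prime p, (0 < k)%N & q = (p ^ k)%N]) ->
  #|L| = (q ^ 2)%N ->
  (#|L|.-1).-primitive_root tau ->
  conic_disc c != 0 ->
  (if t is Some s then s ^+ q == s else true) ->
  let m := #|[set v : 'rV[L]_3 | [&& pnormal v, v 0 (inord 2) == 0
                                   & qform c v == 0]]| in
  let n := #|[set v : 'rV[L]_5 | [&& pnormal v, (v <= gline q tau)%MS
                                   & qform (Qt_coef q c tau t) v == 0]]| in
  [\/ m = 0%N /\ n = 0%N, m = 1%N /\ n = 1%N | m = 2%N /\ n = 2%N].
Proof.
move=> [p [k [p_prime k_gt0 ->]]] hL prim hdisc ht m n.
have q_gt1 : (1 < p ^ k)%N by rewrite -(expn0 p) ltn_exp2l ?prime_gt1.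
have chp : p \in [pchar L].
  by apply: (card_finPcharP (n := (k * 2)%N)); rewrite // hL expnM.
have frobD := frobenius_power_additive k chp.
have frobK := frobenius_involutive hL.
have tau_nfix : tau ^+ (p ^ k) != tau.
  by apply: (prim_root_frob_neq prim); rewrite hL; apply/andP; split; nia.
have w_neq0 : tau ^+ (p ^ k) != 0.
  by rewrite expf_neq0 // (prim_root_eq0 prim) -lt0n (prim_order_gt0 prim).
have tau_neq_w : tau - tau ^+ (p ^ k) != 0 by rewrite subr_eq0 eq_sym.
have lambda_neq0 := qt_lambda_neq0 frobK w_neq0 tau_neq_w ht.
have n_eq_m : n = m by apply: card_Qt_on_gline => //; apply: ltnW.
rewrite n_eq_m; have := card_conic_at_infinity hdisc; rewrite -/m.
by case: m {n n_eq_m} => [|[|[|m]]] //= _;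
  [constructor 1 | constructor 2 | constructor 3].
Qed.
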